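(* Let $n\ge2$, $a\ge\sqrt{n-1}$, $f(x)=a|x^{(1)}|+\sum_{i=2}^n x^{(i)}$ on $\mathbb{R}^n$, $0<c_1<c_2<1$, and $\tau=c_1+\frac{(n-1)(c_1-1)}{a^2}$. Let $x_0\in\mathbb{R}^n$ with $x_0^{(1)}\ne0$, and define iteratively $d_k=-\nabla f(x_k)$, $$t_k=\frac{2|x_k^{(1)}|}{(\tau+1)a},\qquad x_{k+1}=x_k+t_kd_k.$$ Then (1) $A(t_k)$ and $W(t_k)$ both hold for every $k$; and (2) if $\tau\le0$, then $f(x_k)$ is unbounded below as $k\to\infty$.
   Context: $x^{(i)}$ is the $i$-th coordinate. Note $-1<\tau<1$. At iteration $k$, the Armijo condition is $A(t)$: $f(x_k+td_k)\le f(x_k)+c_1t\nabla f(x_k)^Td_k$; the Wolfe condition is $W(t)$: $f$ is differentiable at $x_k+td_k$ and $\nabla f(x_k+td_k)^Td_k\ge c_2\nabla f(x_k)^Td_k$. *)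

From HB Require Import structures.
From mathcomp Require Import all_boot all_order all_algebra.
From mathcomp Require Import all_classical all_reals all_analysis.
Set Implicit Arguments. Unset Strict Implicit. Unset Printing Implicit Defensive.
Import Order.TTheory GRing.Theory Num.Theory.
Import numFieldNormedType.Exports.
Local Open Scope ring_scope.

Section Defs.
Variables (R : realType) (n : nat).

(* first coordinate x^(1) of x in R^n (indices are 0-based in 'I_n, so this
   is the entry of index 0; well-defined as a genuine coordinate for n >= 1) *)
Definition coord1 (x : 'rV[R]_n) : R := \sum_(i < n | val i == 0%N) x 0 i.

Definition fobj (a : R) (x : 'rV[R]_n) : R :=
  a * `|coord1 x| + \sum_(i < n | val i != 0%N) x 0 i.

Definition dotv (u v : 'rV[R]_n) : R := \sum_(i < n) u 0 i * v 0 i.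

Definition grad (f : 'rV[R]_n -> R) (x : 'rV[R]_n) : 'rV[R]_n :=
  \row_(i < n) ('d f x (delta_mx 0 i : 'rV[R]_n)).

Definition Armijo (f : 'rV[R]_n -> R) (c1 : R) (x d : 'rV[R]_n) (t : R) : Prop :=
  f (x + t *: d) <= f x + c1 * t * dotv (grad f x) d.

Definition Wolfe (f : 'rV[R]_n -> R) (c2 : R) (x d : 'rV[R]_n) (t : R) : Prop :=
  differentiable f (x + t *: d) /\
  dotv (grad f (x + t *: d)) d >= c2 * dotv (grad f x) d.

End Defs.

From HB Require Import structures.
From mathcomp Require Import all_boot all_order all_algebra.
From mathcomp Require Import all_classical all_reals all_analysis.
From mathcomp Require Import ring lra.
Import Order.TTheory GRing.Theory Num.Theory.
Import numFieldNormedType.Exports.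
Set Implicit Arguments. Unset Strict Implicit. Unset Printing Implicit Defensive.
Local Open Scope ring_scope.

(* On each open half-space where x^(1) <> 0 the objective is affine, with gradient
   g = (a sg x^(1), 1, ..., 1) and |g|^2 = a^2 + (n - 1).  A step of length t_k along -g
   therefore multiplies x^(1) by rho = (tau - 1) / (tau + 1) < 0 and lowers f by exactly
   c1 t_k |g|^2: the Armijo condition holds with equality.  As rho < 0 the sign of x^(1)
   flips, so the new slope along d_k is a^2 - (n - 1) >= 0, which gives Wolfe.  When
   tau <= 0 we have |rho| >= 1, so the step lengths never shrink and f drops by a fixed
   positive amount at every step. *)


Section locally_affine.
Context {R : numFieldType} {V W : normedModType R}.

Lemma is_diff_near_affine (f : V -> W) (L : {linear V -> W}) (x : V) :
  continuous L -> (\forall y \near x, f y = f x + L (y - x)) -> is_diff x f L.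
Proof.
move=> Lc /nbhs0P fE.
have fL : f \o shift x = cst (f x) + L +o_ 0 id.
  apply/eqaddoP => e e0; near=> h.
  rewrite !fctE /= [h + x]addrC (near fE h) // [x + h - x]addrC addKr subrr normr0.
  by rewrite mulr_ge0 // ltW.
have dfL : 'd f x = L :> (V -> W) by exact: diff_unique.
apply: DiffDef => //; apply/diff_locallyP; rewrite dfL; split => //.
Unshelve. all: by end_near. Qed.

End locally_affine.

Section row_forms.
Variables (R : realType) (n : nat).
Implicit Types (u v : 'rV[R]_n).

Lemma dotv_is_linear u : linear (dotv u).
Proof.
move=> k v w; rewrite /dotv scaler_sumr -big_split; apply: eq_bigr => i _ /=.
by rewrite !mxE mulrDr mulrCA.
Qed.

HB.instance Definition _ u :=
  GRing.isLinear.Build R 'rV[R]_n R *:%R (dotv u) (dotv_is_linear u).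

Lemma dotv_continuous u : continuous (dotv u).
Proof.
apply: continuous_big => [|i _]; first exact: add_continuous.
move=> v; apply: (@continuousM _ _ (cst (u 0 i)) (fun w : 'rV[R]_n => w 0 i)).
  exact: cst_continuous.
exact: coord_continuous.
Qed.

Lemma dotv_delta u i : dotv u (delta_mx 0 i) = u 0 i.
Proof.
rewrite /dotv (bigD1 i) //= big1 => [|j ji]; first by rewrite !mxE !eqxx mulr1 addr0.
by rewrite !mxE (negbTE ji) andbF mulr0.
Qed.

Lemma coord1_is_linear : linear (@coord1 R n).
Proof.
move=> k u v; rewrite /coord1 scaler_sumr -big_split; apply: eq_bigr => i _ /=.
by rewrite !mxE.
Qed.

HB.instance Definition _ :=
  GRing.isLinear.Build R 'rV[R]_n R *:%R (@coord1 R n) coord1_is_linear.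

Lemma coord1_continuous : continuous (@coord1 R n).
Proof.
apply: continuous_big => [|i _]; [exact: add_continuous | exact: coord_continuous].
Qed.

Definition coord_tail v : R := \sum_(i < n | val i != 0%N) v 0 i.

Lemma coord_tail_is_linear : linear coord_tail.
Proof.
move=> k u v; rewrite /coord_tail scaler_sumr -big_split; apply: eq_bigr => i _ /=.
by rewrite !mxE.
Qed.

HB.instance Definition _ :=
  GRing.isLinear.Build R 'rV[R]_n R *:%R coord_tail coord_tail_is_linear.

End row_forms.

Lemma near_norm_sg (R : realType) (r : R) :
  r != 0 -> \forall y \near r, `|y| = Num.sg r * y.
Proof.
case: (ltrgt0P r) => [r_gt0|r_lt0|//] _.
- apply: filterS (Nlt_nbhsl (_ : - r < 0)) => [y|]; last by rewrite oppr_lt0.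
  by rewrite oppr_lt0 => y_gt0; rewrite gtr0_sg // mul1r gtr0_norm.
- apply: filterS (lt_nbhsl r_lt0) => y y_lt0.
  by rewrite ltr0_sg // mulN1r ltr0_norm.
Qed.

Section objective.
Variables (R : realType) (n : nat) (a : R).
Implicit Types (v x y : 'rV[R]_n).

Definition fobj_grad (s : R) : 'rV[R]_n := \row_i (if val i == 0%N then a * s else 1).

Lemma fobjE v : fobj a v = a * `|coord1 v| + coord_tail v.
Proof. by []. Qed.

Lemma dotv_fobj_grad s v : dotv (fobj_grad s) v = a * s * coord1 v + coord_tail v.
Proof.
rewrite /dotv (bigID (fun i : 'I_n => val i == 0%N)) /= mulr_sumr.
congr (_ + _); apply: eq_bigr => i; rewrite mxE; first by move=> ->.
by move=> /negPf ->; rewrite mul1r.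
Qed.

Lemma fobj_near_affine x : coord1 x != 0 ->
  \forall y \near x, fobj a y = fobj a x + dotv (fobj_grad (Num.sg (coord1 x))) (y - x).
Proof.
move=> x1_neq0; near=> y.
have y1E : `|coord1 y| = Num.sg (coord1 x) * coord1 y.
  by near: y; exact: (coord1_continuous (near_norm_sg x1_neq0)).
rewrite !fobjE dotv_fobj_grad !raddfB /= y1E [`|coord1 x|]normrEsg; ring.
Unshelve. all: by end_near. Qed.

Lemma is_diff_fobj x : coord1 x != 0 ->
  is_diff x (fobj a) (dotv (fobj_grad (Num.sg (coord1 x)))).
Proof.
move=> x1_neq0; apply: is_diff_near_affine; first exact: dotv_continuous.
exact: fobj_near_affine.
Qed.

Lemma grad_fobj x : coord1 x != 0 -> grad (fobj a) x = fobj_grad (Num.sg (coord1 x)).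
Proof.
move=> x1_neq0; have fx := is_diff_fobj x1_neq0.
by apply/rowP => i; rewrite mxE diff_val dotv_delta.
Qed.

Hypothesis n_gt0 : (0 < n)%N.

Lemma coord1E v : coord1 v = v 0 (Ordinal n_gt0).
Proof. by rewrite /coord1 (big_pred1 (Ordinal n_gt0)) // => i; rewrite /= -val_eqE. Qed.

Lemma coord1_fobj_grad s : coord1 (fobj_grad s) = a * s.
Proof. by rewrite coord1E mxE. Qed.

Lemma coord_tail_fobj_grad s : coord_tail (fobj_grad s) = (n - 1)%:R.
Proof.
rewrite /coord_tail (eq_bigl (fun i => i != Ordinal n_gt0)) => [|i]; last first.
  by rewrite /= -val_eqE.
rewrite (eq_bigr (fun=> 1)) => [|i]; last by rewrite mxE -val_eqE => /negPf ->.
by rewrite sumr_const cardC1 card_ord subn1.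
Qed.

Lemma dotv_fobj_grads s s' :
  dotv (fobj_grad s) (fobj_grad s') = a ^+ 2 * (s * s') + (n - 1)%:R.
Proof. by rewrite dotv_fobj_grad coord1_fobj_grad coord_tail_fobj_grad; ring. Qed.

End objective.

Arguments fobj_grad {R n}.

Lemma tau_bounds (R : realType) (N a c1 : R) :
  0 < N <= a ^+ 2 -> 0 < c1 < 1 -> -1 < c1 + N * (c1 - 1) / a ^+ 2 < 1.
Proof.
move=> /andP[N_gt0 Na2] /andP[c1_gt0 c1_lt1]; have a2_gt0 := lt_le_trans N_gt0 Na2.
have q_le1 : N / a ^+ 2 <= 1 by rewrite ler_pdivrMr // mul1r.
have q_gt0 : 0 < N / a ^+ 2 by rewrite divr_gt0.
rewrite mulrAC; apply/andP; split; nra.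
Qed.

Lemma uniform_decrease_unbounded (R : realType) (u : nat -> R) (e : R) :
  0 < e -> (forall k, u k.+1 <= u k - e) -> forall M, exists k, u k < M.
Proof.
move=> e_gt0 u_dec M; have u_le k : u k <= u 0%N - k%:R * e.
  by elim: k => [|k IH]; rewrite ?mul0r ?subr0 // -natr1; have := u_dec k; lra.
set k := (Num.truncn ((u 0%N - M) / e)).+1; exists k.
have : (u 0%N - M) / e < k%:R by exact/real_truncnS_gt/num_real.
by rewrite ltr_pdivrMr //; have := u_le k; lra.
Qed.

Section descent_step.
Variables (R : realType) (n : nat) (a c1 tau : R).
Hypotheses (n_gt0 : (0 < n)%N) (a_gt0 : 0 < a).
Hypotheses (tau_gtN1 : -1 < tau) (tau_lt1 : tau < 1).
Hypothesis tau_def : tau = c1 + (n - 1)%:R * (c1 - 1) / a ^+ 2.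
Implicit Types y : 'rV[R]_n.

Local Notation N := ((n - 1)%:R : R).
Local Notation rho := ((tau - 1) / (tau + 1)).

Definition step_size y : R := 2 * `|coord1 y| / ((tau + 1) * a).

Definition descent_step y : 'rV[R]_n :=
  y + step_size y *: - fobj_grad a (Num.sg (coord1 y)).

Let tau1_gt0 : 0 < tau + 1. Proof. by rewrite -ltrBlDr sub0r. Qed.
Let tau1_neq0 : tau + 1 != 0. Proof. by rewrite gt_eqF. Qed.
Let a_neq0 : a != 0. Proof. by rewrite gt_eqF. Qed.
Let aN_gt0 : 0 < a ^+ 2 + N. Proof. exact: ltr_pwDl (exprn_gt0 _ a_gt0) (ler0n _ _). Qed.

Lemma rho_lt0 : rho < 0.
Proof. by rewrite pmulr_llt0 ?invr_gt0 ?subr_lt0. Qed.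

Lemma coord1_descent_step y : coord1 (descent_step y) = rho * coord1 y.
Proof.
rewrite linearD linearZ linearN /= (coord1_fobj_grad _ n_gt0) /step_size.
rewrite -[_ *: _]/(_ * _).
have y1E := mulr_sg_norm (coord1 y).
set s := Num.sg _ in y1E *; set u := `|_| in y1E *; rewrite -y1E.
by field; rewrite tau1_neq0 a_neq0.
Qed.

Lemma fobj_descent_step y :
  fobj a (descent_step y) = fobj a y - c1 * step_size y * (a ^+ 2 + N).
Proof.
have key : c1 * (a ^+ 2 + N) = tau * a ^+ 2 + N by rewrite tau_def; field.
rewrite !fobjE coord1_descent_step normrM (ltr0_norm rho_lt0).
rewrite [coord_tail (_ + _)]linearD /= [coord_tail (_ *: _)]linearZ /= linearN /=.
rewrite (coord_tail_fobj_grad _ n_gt0) -[_ *: _]/(_ * _).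
rewrite [c1 * _ * _]mulrAC key /step_size.
by field; rewrite tau1_neq0 a_neq0.
Qed.

Lemma coord1_descent_step_neq0 y : coord1 y != 0 -> coord1 (descent_step y) != 0.
Proof.
by move=> y1_neq0; rewrite coord1_descent_step mulf_neq0 // ltr0_neq0 // rho_lt0.
Qed.

Lemma armijo_descent_step y : coord1 y != 0 ->
  Armijo (fobj a) c1 y (- grad (fobj a) y) (step_size y).
Proof.
move=> y1_neq0; rewrite /Armijo grad_fobj // -[y + _]/(descent_step y).
rewrite fobj_descent_step linearN /= (dotv_fobj_grads _ n_gt0) -expr2 sqr_sg y1_neq0.
by rewrite mulr1 mulrN.
Qed.

Lemma wolfe_descent_step c2 y : 0 <= c2 -> N <= a ^+ 2 -> coord1 y != 0 ->
  Wolfe (fobj a) c2 y (- grad (fobj a) y) (step_size y).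
Proof.
move=> c2_ge0 Na2 y1_neq0; have z1_neq0 := coord1_descent_step_neq0 y1_neq0.
rewrite /Wolfe grad_fobj // -[y + _]/(descent_step y); split.
  by have := is_diff_fobj a z1_neq0; case.
rewrite grad_fobj // coord1_descent_step sgrM (ltr0_sg rho_lt0) !linearN /=.
rewrite !(dotv_fobj_grads _ n_gt0) mulN1r mulNr -expr2 sqr_sg y1_neq0 /= mulr1 mulrN1.
apply: (@le_trans _ _ 0); last by rewrite opprD opprK subr_ge0.
by rewrite mulrN oppr_le0 mulr_ge0 // addr_ge0 ?sqr_ge0.
Qed.

Lemma step_size_le_descent_step y :
  tau <= 0 -> step_size y <= step_size (descent_step y).
Proof.
move=> tau_le0; rewrite /step_size coord1_descent_step normrM (ltr0_norm rho_lt0).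
rewrite ler_pM2r ?invr_gt0 ?mulr_gt0 // ler_pM2l // ler_peMl //.
by rewrite -mulNr opprB ler_pdivlMr // mul1r; lra.
Qed.

Lemma fobj_descent_unbounded y : tau <= 0 -> 0 < c1 -> coord1 y != 0 ->
  forall M, exists k, fobj a (iter k descent_step y) < M.
Proof.
move=> tau_le0 c1_gt0 y1_neq0.
have t_gt0 : 0 < step_size y by rewrite divr_gt0 ?mulr_gt0 ?normr_gt0.
apply: (@uniform_decrease_unbounded _ _ (c1 * step_size y * (a ^+ 2 + N))).
  exact: mulr_gt0 (mulr_gt0 c1_gt0 t_gt0) aN_gt0.
move=> k; rewrite iterS fobj_descent_step lerD2l lerN2 ler_pM2r ?ler_pM2l //.
by elim: k => [|k IH] //; apply: le_trans IH (step_size_le_descent_step _ tau_le0).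
Qed.

End descent_step.

Theorem theorem2 (R : realType) (n : nat) (hn : (2 <= n)%N)
  (a : R) (ha : Num.sqrt ((n - 1)%:R) <= a)
  (c1 c2 : R) (hc1 : 0 < c1) (hc12 : c1 < c2) (hc2 : c2 < 1)
  (tau : R) (htau : tau = c1 + ((n - 1)%:R * (c1 - 1)) / (a ^+ 2))
  (x0 : 'rV[R]_n) (hx0 : coord1 x0 != 0)
  (x d : nat -> 'rV[R]_n) (t : nat -> R)
  (hxinit : x 0%N = x0)
  (hd : forall k, d k = - grad (fobj a) (x k))
  (ht : forall k, t k = (2 * `|coord1 (x k)|) / ((tau + 1) * a))
  (hxs : forall k, x k.+1 = x k + t k *: d k) :
  (forall k, Armijo (fobj a) c1 (x k) (d k) (t k) /\
             Wolfe (fobj a) c2 (x k) (d k) (t k)) /\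
  (tau <= 0 -> forall M : R, exists k, fobj a (x k) < M).
Proof.
have n_gt0 : (0 < n)%N by apply: leq_trans hn.
have N_gt0 : 0 < (n - 1)%:R :> R by rewrite ltr0n subn_gt0.
have a_gt0 : 0 < a by apply: lt_le_trans ha; rewrite sqrtr_gt0.
have Na2 : (n - 1)%:R <= a ^+ 2.
  by rewrite -(sqr_sqrtr (ltW N_gt0)) ler_sqr // nnegrE ?sqrtr_ge0 // ltW.
have /andP[tau_gtN1 tau_lt1] : -1 < tau < 1.
  by rewrite htau tau_bounds ?N_gt0 ?hc1 ?(lt_trans hc12 hc2).
have x_next k : coord1 (x k) != 0 -> x k.+1 = descent_step a tau (x k).
  by move=> xk_neq0; rewrite hxs hd ht grad_fobj.
have x_neq0 k : coord1 (x k) != 0.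
  elim: k => [|k IH]; first by rewrite hxinit.
  by rewrite x_next // (coord1_descent_step_neq0 n_gt0).
split=> [k | tau_le0 M].
  rewrite hd ht; split; first exact: armijo_descent_step.
  by apply: wolfe_descent_step; rewrite // ltW // (lt_trans hc1).
have xE k : x k = iter k (descent_step a tau) x0.
  by elim: k => [|k IH] //=; rewrite x_next // IH.
have [k fk] := fobj_descent_unbounded n_gt0 a_gt0 tau_gtN1 tau_lt1 htau tau_le0 hc1 hx0 M.
by exists k; rewrite xE.
Qed.
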